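(* Let $X$ be an irreducible sofic shift, $Y$ an irreducible shift of finite type, and $f:X\to Y$ a factor map which is right-continuing almost-everywhere with retract $0$. Then $f$ is right-continuing with retract $0$ (everywhere): for every $x\in X$ and every $y\in Y$ with $f(x)_i=y_i$ for all $i\le0$, there exists $x'\in X$ with $x'_i=x_i$ for all $i\le0$ and $f(x')=y$.
   Context: Subshifts are closed shift-invariant subsets of $A^{\mathbb Z}$, $A$ finite, with shift $\sigma(x)_i=x_{i+1}$; a factor map is a continuous, shift-commuting, onto map. A point $y\in Y$ is left-transitive in $Y$ if $\{\sigma^i(y): i\le 0\}$ is dense in $Y$. For an integer $n\ge0$, $f:X\to Y$ is right-continuing almost-everywhere with retract $n$ if for every $x\in X$ and every left-transitive $y\in Y$ with $f(x)_i=y_i$ for all $i\le n$, there exists $x'\in X$ with $x'_i=x_i$ for all $i\le 0$ and $f(x')=y$. *)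

From Stdlib Require Import ZArith List FinFun.
Import ListNotations.
Open Scope Z_scope.

Definition config (A : Type) := Z -> A.

Definition agree_on {A : Type} (x y : Z -> A) (N : Z) : Prop :=
  forall i, -N <= i <= N -> x i = y i.

Definition shift {A : Type} (x : Z -> A) : Z -> A := fun i => x (i + 1).
Definition shiftn {A : Type} (n : Z) (x : Z -> A) : Z -> A := fun i => x (i + n).

Definition closed_set {A : Type} (X : (Z -> A) -> Prop) : Prop :=
  forall x, (forall N, exists x', X x' /\ agree_on x x' N) -> X x.

Definition shift_invariant {A : Type} (X : (Z -> A) -> Prop) : Prop :=
  forall x, X x <-> X (shift x).

Definition is_subshift {A : Type} (X : (Z -> A) -> Prop) : Prop :=
  closed_set X /\ shift_invariant X.

Definition occurs {A : Type} (w : list A) (x : Z -> A) (i : Z) : Prop :=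
  forall k : nat, (k < length w)%nat -> nth_error w k = Some (x (i + Z.of_nat k)).

Definition in_language {A : Type} (X : (Z -> A) -> Prop) (w : list A) : Prop :=
  exists x i, X x /\ occurs w x i.

Definition irreducible {A : Type} (X : (Z -> A) -> Prop) : Prop :=
  forall u w, in_language X u -> in_language X w ->
    exists v, in_language X (u ++ v ++ w).

Definition is_SFT {A : Type} (X : (Z -> A) -> Prop) : Prop :=
  is_subshift X /\
  exists F : list (list A),
    forall x, X x <-> (forall w i, In w F -> ~ occurs w x i).

Definition continuous_on {A B : Type} (X : (Z -> A) -> Prop) (f : (Z -> A) -> (Z -> B)) : Prop :=
  forall x, X x -> forall N, exists M, forall x', X x' -> agree_on x x' M ->
    agree_on (f x) (f x') N.

Definition factor_map {A B : Type} (X : (Z -> A) -> Prop) (Y : (Z -> B) -> Prop)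
    (f : (Z -> A) -> (Z -> B)) : Prop :=
  (forall x, X x -> Y (f x)) /\
  continuous_on X f /\
  (forall x, X x -> forall i, f (shift x) i = shift (f x) i) /\
  (forall y, Y y -> exists x, X x /\ forall i, f x i = y i).

Definition is_sofic {A : Type} (X : (Z -> A) -> Prop) : Prop :=
  is_subshift X /\
  exists (C : Type) (W : (Z -> C) -> Prop) (g : (Z -> C) -> (Z -> A)),
    Finite C /\ is_SFT W /\ factor_map W X g.

Definition left_transitive {B : Type} (Y : (Z -> B) -> Prop) (y : Z -> B) : Prop :=
  Y y /\
  forall y', Y y' -> forall N, exists i, i <= 0 /\ agree_on (shiftn i y) y' N.

Definition right_continuing_ae {A B : Type} (X : (Z -> A) -> Prop) (Y : (Z -> B) -> Prop)
    (f : (Z -> A) -> (Z -> B)) (n : nat) : Prop :=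
  forall x y, X x -> left_transitive Y y ->
    (forall i, i <= Z.of_nat n -> f x i = y i) ->
    exists x', X x' /\ (forall i, i <= 0 -> x' i = x i) /\ (forall i, f x' i = y i).

From Pilot Require Import Defs.
From Stdlib Require Import ZArith List FinFun.
From Stdlib Require Import Lia Classical ClassicalEpsilon FunctionalExtensionality.
Import ListNotations.
Open Scope Z_scope.

(** For each window [[-n, n]] we
    replace [x] by a point [xt] of [X] agreeing with [x] on a large central
    window and whose left orbit is dense in [X] (it exists by irreducibility:
    finite nets of [X] are glued further and further to the left).  Because
    [Y] has finite memory, splicing the left half of [f xt] with the right half
    of [y] gives a point of [Y]; it is left-transitive, being the image of a
    left-dense point on its left half.  The hypothesis then continues [xt] to a
    preimage of the splice, which agrees with [x] on [[-n, 0]] and whose image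
    agrees with [y] on [[-n, n]].  A cluster point of these approximations,
    given by compactness of [A^Z], is the required [x']. *)

(* ZArith also exports a function named [shift]; we mean the shift map of [Defs]. *)
Local Notation shift := Defs.shift.

Lemma agree_sym {A} (x y : Z -> A) N : agree_on x y N -> agree_on y x N.
Proof. intros H i Hi; symmetry; apply H; auto. Qed.

Lemma agree_trans {A} (x y z : Z -> A) N :
  agree_on x y N -> agree_on y z N -> agree_on x z N.
Proof. intros H1 H2 i Hi; rewrite H1 by auto; apply H2; auto. Qed.

Lemma agree_mono {A} (x y : Z -> A) N M : M <= N -> agree_on x y N -> agree_on x y M.
Proof. intros Hm H i Hi; apply H; lia. Qed.

Lemma shiftn_succ {A} (n : Z) (x : Z -> A) : shiftn (Z.succ n) x = shift (shiftn n x).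
Proof. apply functional_extensionality; intro i; unfold shiftn, shift; f_equal; lia. Qed.

Lemma shift_shiftn_pred {A} (n : Z) (x : Z -> A) : shift (shiftn (Z.pred n) x) = shiftn n x.
Proof. apply functional_extensionality; intro i; unfold shiftn, shift; f_equal; lia. Qed.

Lemma shiftn_invariant {A} (X : (Z -> A) -> Prop) :
  shift_invariant X -> forall x, X x -> forall n, X (shiftn n x).
Proof.
  intros HS x Hx n; induction n as [| n IH | n IH] using Z.peano_ind.
  - replace (shiftn 0 x) with x; [exact Hx|].
    apply functional_extensionality; intro i; unfold shiftn; f_equal; lia.
  - rewrite shiftn_succ; apply (proj1 (HS _)); exact IH.
  - apply (proj2 (HS _)); rewrite shift_shiftn_pred; exact IH.
Qed.

Lemma shiftn_commute {A B} (X : (Z -> A) -> Prop) (f : (Z -> A) -> Z -> B) :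
  shift_invariant X -> (forall x, X x -> forall i, f (shift x) i = shift (f x) i) ->
  forall x, X x -> forall n i, f (shiftn n x) i = f x (i + n).
Proof.
  intros HS Hf x Hx n; induction n as [| n IH | n IH] using Z.peano_ind; intro i.
  - replace (shiftn 0 x) with x; [f_equal; lia|].
    apply functional_extensionality; intro j; unfold shiftn; f_equal; lia.
  - rewrite shiftn_succ, Hf by (apply shiftn_invariant; auto).
    unfold shift; rewrite IH; f_equal; lia.
  - pose proof (Hf _ (shiftn_invariant X HS x Hx (Z.pred n)) (i - 1)) as E.
    rewrite shift_shiftn_pred, IH in E; unfold shift in E.
    replace (i - 1 + 1) with i in E by lia.
    rewrite <- E; f_equal; lia.
Qed.

(** * Compactness of [A^Z] for a finite alphabet [A]

    We
    build it by nested pigeonhole refinements: at stage [j] we keep infinitely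
    many indices whose terms agree at the coordinates [-j .. j]. *)

Definition cluster_point {A} (z : nat -> Z -> A) (x : Z -> A) : Prop :=
  forall N k0, exists k, (k0 <= k)%nat /\ agree_on x (z k) N.

Definition infinitely_often (S : nat -> Prop) : Prop :=
  forall k0, exists k, (k0 <= k)%nat /\ S k.

Lemma pigeonhole_letter {A} (z : nat -> Z -> A) (c : Z) (l : list A) :
  forall S : nat -> Prop, infinitely_often S -> (forall k, S k -> In (z k c) l) ->
  exists a, infinitely_often (fun k => S k /\ z k c = a).
Proof.
  induction l as [| a l IH]; intros S HS Hin.
  - destruct (HS O) as [k [_ Hk]]; destruct (Hin k Hk).
  - destruct (classic (infinitely_often (fun k => S k /\ z k c = a))) as [Ha | Hna];
      [eauto |].
    (* beyond some index the letter [a] no longer occurs, so the others recur *)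
    assert (Hbound : exists k1, forall k, (k1 <= k)%nat -> S k -> z k c <> a).
    { apply NNPP; intro Hn; apply Hna; intro k0.
      apply NNPP; intro Hk0; apply Hn; exists k0; intros k Hk Sk E; apply Hk0; eauto. }
    destruct Hbound as [k1 Hk1].
    destruct (IH (fun k => S k /\ z k c <> a)) as [a' Ha'].
    + intro k0; destruct (HS (Nat.max k0 k1)) as [k [Hk Sk]].
      exists k; split; [lia |]; split; [exact Sk |]; apply Hk1; [lia | exact Sk].
    + intros k [Sk Nk]; destruct (Hin k Sk) as [E | H]; [congruence | exact H].
    + exists a'; intro k0; destruct (Ha' k0) as [k [Hk [[Sk _] E]]]; eauto.
Qed.

Section Compactness.

Variable A : Type.
Hypothesis HA : Finite A.
Variable z : nat -> Z -> A.

Definition refine_at (S : nat -> Prop) (c : Z) : nat -> Prop :=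
  fun k => S k /\
    z k c = epsilon (inhabits (z O 0)) (fun a => infinitely_often (fun k => S k /\ z k c = a)).

Fixpoint nested (j : nat) : nat -> Prop :=
  match j with
  | O => fun _ => True
  | S j => refine_at (refine_at (nested j) (Z.of_nat j)) (- Z.of_nat j)
  end.

Lemma refine_at_infinite S c : infinitely_often S -> infinitely_often (refine_at S c).
Proof.
  intro H; destruct HA as [l Hl].
  apply (epsilon_spec (inhabits (z O 0)) (fun a => infinitely_often (fun k => S k /\ z k c = a))).
  apply pigeonhole_letter with l; auto.
Qed.

Lemma nested_infinite j : infinitely_often (nested j).
Proof.
  induction j as [| j IH]; simpl.
  - intro k0; exists k0; auto.
  - do 2 apply refine_at_infinite; exact IH.
Qed.

Lemma nested_antitone j j' : (j <= j')%nat -> forall k, nested j' k -> nested j k.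
Proof.
  induction 1 as [| j' _ IH]; auto.
  intros k Hk; apply IH; simpl in Hk; unfold refine_at in Hk; tauto.
Qed.

Lemma nested_letter i : exists a, forall k, nested (S (Z.to_nat (Z.abs i))) k -> z k i = a.
Proof.
  simpl; unfold refine_at; destruct (Z_le_gt_dec 0 i); eexists.
  - assert (Ei : i = Z.of_nat (Z.to_nat (Z.abs i))) by lia.
    intros k [[_ E] _]; rewrite Ei at 1; exact E.
  - assert (Ei : i = - Z.of_nat (Z.to_nat (Z.abs i))) by lia.
    intros k [_ E]; rewrite Ei at 1; exact E.
Qed.

Lemma cluster_point_exists : exists x, cluster_point z x.
Proof.
  destruct (choice (fun i a => forall k, nested (S (Z.to_nat (Z.abs i))) k -> z k i = a)
              nested_letter) as [x Hx].
  exists x; intros N k0.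
  destruct (nested_infinite (S (Z.to_nat N)) k0) as [k [Hk Sk]].
  exists k; split; [exact Hk |]; intros i Hi; symmetry; apply Hx.
  apply nested_antitone with (S (Z.to_nat N)); [lia | exact Sk].
Qed.

End Compactness.

Arguments cluster_point_exists {A} HA z.

Lemma cluster_point_closed {A} (X : (Z -> A) -> Prop) z x :
  closed_set X -> (forall k, X (z k)) -> cluster_point z x -> X x.
Proof.
  intros HC Hz Hx; apply HC; intro N.
  destruct (Hx N O) as [k [_ Hk]]; exists (z k); auto.
Qed.

Lemma coherent_limit {A} (HA : Finite A) (w : nat -> Z -> A) (R : nat -> Z) :
  (forall n, R n <= R (S n) /\ agree_on (w n) (w (S n)) (R n)) ->
  exists x, cluster_point w x /\ forall n, agree_on x (w n) (R n).
Proof.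
  intro Hstep.
  assert (Hcoh : forall n m, (n <= m)%nat -> R n <= R m /\ agree_on (w n) (w m) (R n)).
  { induction 1 as [| m _ [IH1 IH2]]; [split; [lia | intros i _; auto] |].
    destruct (Hstep m) as [H1 H2]; split; [lia |].
    apply agree_trans with (w m); [exact IH2 | apply agree_mono with (R m); auto]. }
  destruct (cluster_point_exists HA w) as [x Hx].
  exists x; split; [exact Hx |]; intro n.
  destruct (Hx (R n) n) as [k [Hk Ha]].
  apply agree_trans with (w k); [exact Ha | apply agree_sym, Hcoh, Hk].
Qed.

(** * Finite nets

    Over a finite alphabet only finitely many patterns fit in a window, so any
    set of configurations is covered, up to agreement on a window, by a finite
    list of its own elements. *)

Lemma finite_net_on {A} (HA : Finite A) (ps : list Z) :
  forall X : (Z -> A) -> Prop, exists T, (forall t, In t T -> X t) /\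
    forall x, X x -> exists t, In t T /\ forall q, In q ps -> x q = t q.
Proof.
  destruct HA as [l Hl].
  induction ps as [| q ps IH]; intro X.
  - destruct (classic (exists x, X x)) as [[x Hx] | Hn].
    + exists [x]; split; [intros t [<- | []]; exact Hx |].
      intros x' _; exists x; split; [left; reflexivity | intros q []].
    + exists []; split; [intros t [] |]; intros x Hx; exfalso; eauto.
  - (* cover separately the configurations with each letter at [q] *)
    destruct (choice (fun a T => (forall t, In t T -> X t /\ t q = a) /\
                  forall x, X x /\ x q = a ->
                  exists t, In t T /\ forall q', In q' ps -> x q' = t q')
                (fun a => IH (fun x => X x /\ x q = a))) as [net Hnet].
    exists (flat_map net l); split.
    + intros t Ht; apply in_flat_map in Ht as [a [_ Ht]].
      apply (proj1 (Hnet a) t Ht).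
    + intros x Hx.
      destruct (proj2 (Hnet (x q)) x (conj Hx eq_refl)) as [t [Ht Hxt]].
      exists t; split; [apply in_flat_map; eauto |].
      intros q' [<- | Hq']; [| auto].
      symmetry; apply (proj1 (Hnet (x q)) t Ht).
Qed.

Definition window (k : Z) : list Z := map (fun j => Z.of_nat j - k) (seq 0 (Z.to_nat (2 * k + 1))).

Lemma in_window k i : -k <= i <= k -> In i (window k).
Proof.
  intro H; apply in_map_iff; exists (Z.to_nat (i + k)); split; [lia |].
  apply in_seq; lia.
Qed.

Lemma finite_net {A} (HA : Finite A) (X : (Z -> A) -> Prop) (k : Z) :
  exists T, (forall t, In t T -> X t) /\ forall x, X x -> exists t, In t T /\ agree_on x t k.
Proof.
  destruct (finite_net_on HA (window k) X) as [T [HT Hcov]].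
  exists T; split; [exact HT |]; intros x Hx.
  destruct (Hcov x Hx) as [t [Ht Hxt]].
  exists t; split; [exact Ht |]; intros i Hi; apply Hxt, in_window, Hi.
Qed.

(** * Gluing in an irreducible shift *)

Definition word_at {A} (x : Z -> A) (a : Z) (n : nat) : list A :=
  map (fun j => x (a + Z.of_nat j)) (seq 0 n).

Lemma word_at_length {A} (x : Z -> A) a n : length (word_at x a n) = n.
Proof. unfold word_at; rewrite length_map, length_seq; reflexivity. Qed.

Lemma word_at_nth {A} (x : Z -> A) a n j :
  (j < n)%nat -> nth_error (word_at x a n) j = Some (x (a + Z.of_nat j)).
Proof.
  intro H; unfold word_at; rewrite nth_error_map, nth_error_seq.
  destruct (Nat.ltb_spec j n); [reflexivity | lia].
Qed.

Lemma word_at_in_language {A} (X : (Z -> A) -> Prop) x a n :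
  X x -> in_language X (word_at x a n).
Proof.
  intro Hx; exists x, a; split; [exact Hx |].
  intros k Hk; rewrite word_at_length in Hk; apply word_at_nth, Hk.
Qed.

Lemma occurs_app_l {A} (u v s : list A) x i0 j :
  occurs (u ++ v ++ s) x i0 -> (j < length u)%nat ->
  nth_error u j = Some (x (i0 + Z.of_nat j)).
Proof.
  intros H Hj; rewrite <- (H j); [rewrite nth_error_app1; auto |].
  rewrite !length_app; lia.
Qed.

Lemma occurs_app_r {A} (u v s : list A) x i0 j :
  occurs (u ++ v ++ s) x i0 -> (j < length s)%nat ->
  nth_error s j = Some (x (i0 + Z.of_nat (length u + length v + j))).
Proof.
  intros H Hj; rewrite <- (H (length u + length v + j)%nat).
  - rewrite app_assoc, nth_error_app2; rewrite length_app; [f_equal; lia | lia].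
  - rewrite !length_app; lia.
Qed.

(* Irreducibility lets us modify [w] far to the left of its [R]-window so that
   the [k]-window of [t] appears there: the central word of [t], a bridge, and
   the central word of [w] form a word of the language. *)
Lemma glue {A} (X : (Z -> A) -> Prop) : shift_invariant X -> irreducible X ->
  forall w t R k, X w -> X t -> 0 <= R -> 0 <= k ->
  exists w' s, X w' /\ agree_on w w' R /\ s <= -(R + k + 1) /\ agree_on (shiftn s w') t k.
Proof.
  intros HS HI w t R k Hw Ht HR Hk.
  set (u := word_at t (-k) (Z.to_nat (2 * k + 1))).
  set (c := word_at w (-R) (Z.to_nat (2 * R + 1))).
  destruct (HI u c (word_at_in_language X t _ _ Ht) (word_at_in_language X w _ _ Hw))
    as [v [x [i0 [Hx Hocc]]]].
  assert (Hu : length u = Z.to_nat (2 * k + 1)) by apply word_at_length.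
  set (L := Z.of_nat (length u + length v)).
  exists (shiftn (i0 + L + R) x), (k - L - R).
  split; [apply shiftn_invariant; auto |]; split; [| split; [unfold L; lia |]].
  - intros j Hj; unfold shiftn.
    assert (Hj' : (Z.to_nat (j + R) < length c)%nat) by (unfold c; rewrite word_at_length; lia).
    pose proof (occurs_app_r u v c x i0 _ Hocc Hj') as E.
    unfold c in E at 1; rewrite word_at_nth in E by lia; injection E as E.
    replace (-R + Z.of_nat (Z.to_nat (j + R))) with j in E by lia.
    rewrite E; f_equal; unfold L; lia.
  - intros j Hj; unfold shiftn.
    assert (Hj' : (Z.to_nat (j + k) < length u)%nat) by lia.
    pose proof (occurs_app_l u v c x i0 _ Hocc Hj') as E.
    unfold u in E at 1; rewrite word_at_nth in E by lia; injection E as E.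
    replace (-k + Z.of_nat (Z.to_nat (j + k))) with j in E by lia.
    rewrite E; f_equal; lia.
Qed.

(** * Points whose left orbit is dense *)

Definition placed_left {A} (w : Z -> A) (R : Z) (T : list (Z -> A)) (k : Z) : Prop :=
  forall t, In t T -> exists s, s <= -k /\ -R <= s - k /\ agree_on (shiftn s w) t k.

Lemma placed_left_agree {A} (w w' : Z -> A) R T k :
  placed_left w R T k -> agree_on w w' R -> placed_left w' R T k.
Proof.
  intros Hp Hw t Ht; destruct (Hp t Ht) as [s [Hs1 [Hs2 Ha]]].
  exists s; split; [exact Hs1 |]; split; [exact Hs2 |].
  intros j Hj; rewrite <- (Ha j Hj); unfold shiftn; symmetry; apply Hw; lia.
Qed.

Lemma placed_left_mono {A} (w : Z -> A) R R' T k :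
  R <= R' -> placed_left w R T k -> placed_left w R' T k.
Proof.
  intros HR Hp t Ht; destruct (Hp t Ht) as [s [Hs1 [Hs2 Ha]]].
  exists s; repeat split; auto; lia.
Qed.

Lemma place_all {A} (X : (Z -> A) -> Prop) : shift_invariant X -> irreducible X ->
  forall k, 0 <= k -> forall T, (forall t, In t T -> X t) ->
  forall w R, X w -> 0 <= R ->
  exists w' R', X w' /\ R <= R' /\ agree_on w w' R /\ placed_left w' R' T k.
Proof.
  intros HS HI k Hk; induction T as [| t T IH]; intros HT w R Hw HR.
  - exists w, R; repeat split; auto; [lia | intros t []].
  - destruct (IH (fun t' H => HT t' (or_intror H)) w R Hw HR)
      as [w1 [R1 [Hw1 [HR1 [Ha1 Hp1]]]]].
    destruct (glue X HS HI w1 t R1 k Hw1 (HT t (or_introl eq_refl)) ltac:(lia) Hk)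
      as [w2 [s [Hw2 [Ha2 [Hs Hts]]]]].
    exists w2, (k - s); split; [exact Hw2 |]; split; [lia |]; split.
    + apply agree_trans with w1; [exact Ha1 | apply agree_mono with R1; auto].
    + intros t' [<- | Ht'].
      * exists s; repeat split; auto; lia.
      * revert t' Ht'; apply (placed_left_mono w2 R1); [lia | eapply placed_left_agree; eauto].
Qed.

Lemma sequence_of_steps {T} (Inv : T -> Prop) (Step : nat -> T -> T -> Prop) (p0 : T) :
  Inv p0 -> (forall n p, Inv p -> exists q, Inv q /\ Step n p q) ->
  exists sq : nat -> T, sq O = p0 /\ forall n, Inv (sq n) /\ Step n (sq n) (sq (S n)).
Proof.
  intros H0 Hstep.
  destruct (choice (fun (np : nat * T) q => Inv (snd np) -> Inv q /\ Step (fst np) (snd np) q))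
    as [step Hs].
  { intros [n p]; destruct (classic (Inv p)) as [Hp | Hn].
    - destruct (Hstep n p Hp) as [q Hq]; exists q; auto.
    - exists p; intro Hp; contradiction. }
  set (sq := fix sq n := match n with O => p0 | S n => step (n, sq n) end).
  assert (Hinv : forall n, Inv (sq n)).
  { induction n as [| n IH]; [exact H0 | apply (Hs (n, sq n) IH)]. }
  exists sq; split; [reflexivity |]; intro n; split; [apply Hinv | apply (Hs (n, sq n) (Hinv n))].
Qed.

Definition left_dense {A} (X : (Z -> A) -> Prop) (xt : Z -> A) : Prop :=
  forall z, X z -> forall M, 0 <= M -> exists s, s <= -M /\ agree_on (shiftn s xt) z M.

(* In an irreducible subshift, every point can be approximated on any window by
   a point with a dense left orbit: place the finite [n]-nets one after the
   other further and further to the left, and pass to the limit. *)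
Lemma left_dense_approximation {A} (HA : Finite A) (X : (Z -> A) -> Prop) :
  is_subshift X -> irreducible X ->
  forall x R0, X x -> 0 <= R0 -> exists xt, X xt /\ agree_on x xt R0 /\ left_dense X xt.
Proof.
  intros [HC HS] HI x R0 Hx HR0.
  destruct (choice (fun (n : nat) T => (forall t, In t T -> X t) /\
                      forall z, X z -> exists t, In t T /\ agree_on z t (Z.of_nat n))
              (fun n => finite_net HA X (Z.of_nat n))) as [net Hnet].
  destruct (sequence_of_steps (fun p => X (fst p) /\ 0 <= snd p)
    (fun n p q => snd p <= snd q /\ agree_on (fst p) (fst q) (snd p) /\
                  placed_left (fst q) (snd q) (net n) (Z.of_nat n)) (x, R0))
    as [sq [Hsq0 Hsq]]; [split; auto |..].
  { intros n [w R] [Hw HR]; simpl in Hw, HR.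
    destruct (place_all X HS HI (Z.of_nat n) ltac:(lia) (net n) (proj1 (Hnet n)) w R Hw HR)
      as [w' [R' [Hw' [HR' H]]]].
    exists (w', R'); simpl; split; [split; [exact Hw' | lia] | exact (conj HR' H)]. }
  destruct (coherent_limit HA (fun n => fst (sq n)) (fun n => snd (sq n)))
    as [xt [Hcl Hlim]]; [intro n; destruct (Hsq n) as [_ [H1 [H2 _]]]; auto |].
  exists xt; split; [| split].
  - apply (cluster_point_closed X (fun n => fst (sq n)) xt HC); [intro k; apply (Hsq k) | exact Hcl].
  - pose proof (Hlim O) as H; rewrite Hsq0 in H; apply agree_sym, H.
  - intros z Hz M HM.
    destruct (proj2 (Hnet (Z.to_nat M)) z Hz) as [t [Ht Hzt]].
    destruct (Hsq (Z.to_nat M)) as [_ [_ [_ Hp]]].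
    destruct (placed_left_agree _ xt _ _ _ Hp (agree_sym _ _ _ (Hlim (S (Z.to_nat M)))) t Ht)
      as [s [Hs1 [_ Hst]]].
    rewrite Z2Nat.id in * by exact HM.
    exists s; split; [exact Hs1 |].
    apply agree_trans with t; [exact Hst | apply agree_sym, Hzt].
Qed.

(** * Splicing in a shift of finite type *)

Definition splice {B} (y1 y2 : Z -> B) : Z -> B := fun i => if i <=? 0 then y1 i else y2 i.

Lemma SFT_splice {B} (Y : (Z -> B) -> Prop) : is_SFT Y ->
  exists L, 0 <= L /\ forall y1 y2, Y y1 -> Y y2 ->
    (forall i, -L <= i <= 0 -> y1 i = y2 i) -> Y (splice y1 y2).
Proof.
  intros [_ [F HF]].
  set (L := Z.of_nat (list_max (map (@length B) F))).
  assert (HL : forall w, In w F -> Z.of_nat (length w) <= L).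
  { intros w Hw; unfold L.
    pose proof (proj1 (list_max_le (map (@length B) F) _) (le_n _)) as H.
    rewrite Forall_forall in H; specialize (H (length w) (in_map _ _ _ Hw)); lia. }
  exists L; split; [lia |]; intros y1 y2 Hy1 Hy2 H12.
  apply HF; intros w i Hw Hocc; pose proof (HL w Hw).
  destruct (Z_lt_le_dec i (-L)).
  - (* an occurrence starting before [-L] lies entirely in the [y1] half *)
    apply (proj1 (HF y1) Hy1 w i Hw); intros k Hk; rewrite (Hocc k Hk).
    unfold splice; destruct (Z.leb_spec (i + Z.of_nat k) 0); [reflexivity | lia].
  - (* any other occurrence lies where the splice coincides with [y2] *)
    apply (proj1 (HF y2) Hy2 w i Hw); intros k Hk; rewrite (Hocc k Hk).
    unfold splice; destruct (Z.leb_spec (i + Z.of_nat k) 0); [| reflexivity].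
    f_equal; apply H12; lia.
Qed.

(** * Right-continuation *)

Section RightContinuation.

Variables A B : Type.
Hypothesis HA : Finite A.
Variable X : (Z -> A) -> Prop.
Variable Y : (Z -> B) -> Prop.
Variable f : (Z -> A) -> Z -> B.
Hypothesis HXsub : is_subshift X.
Hypothesis HXirr : irreducible X.
Hypothesis HYsft : is_SFT Y.
Hypothesis Hf : factor_map X Y f.
Hypothesis Hae : right_continuing_ae X Y f 0.

(* A point of [Y] whose left half is the image of a left-dense point of [X] is
   left-transitive: onto-ness and continuity of [f] carry density over. *)
Lemma left_transitive_image xt y :
  X xt -> left_dense X xt -> Y y -> (forall i, i <= 0 -> y i = f xt i) ->
  left_transitive Y y.
Proof.
  destruct HXsub as [_ HS]; destruct Hf as [_ [Hfc [Hfs Hfo]]].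
  intros Hxt Hdense Hy Hleft; split; [exact Hy |]; intros y' Hy' N.
  destruct (Z_lt_le_dec N 0) as [HN | HN]; [exists 0; split; [lia | intros i Hi; lia] |].
  destruct (Hfo y' Hy') as [z [Hz Hzy]].
  destruct (Hfc z Hz N) as [M HM].
  destruct (Hdense z Hz (Z.max M N) ltac:(lia)) as [s [Hs Has]].
  assert (Hzs : agree_on (f z) (f (shiftn s xt)) N).
  { apply HM; [apply shiftn_invariant; auto |].
    apply agree_sym, agree_mono with (Z.max M N); [lia | exact Has]. }
  exists s; split; [lia |]; intros j Hj; unfold shiftn.
  rewrite Hleft, <- Hzy, (Hzs j Hj) by lia.
  symmetry; apply (shiftn_commute X f HS Hfs xt Hxt).
Qed.

(* Replace [x] by a left-dense point
   [xt] sharing a large central window, splice [f xt] with [y], and apply the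
   almost-everywhere hypothesis to the resulting left-transitive point. *)
Lemma right_continuation_on_window x y n :
  X x -> Y y -> (forall i, i <= 0 -> f x i = y i) -> 0 <= n ->
  exists xn, X xn /\ (forall i, -n <= i <= 0 -> xn i = x i) /\
             (forall i, -n <= i <= n -> f xn i = y i).
Proof.
  intros Hx Hy Hxy Hn.
  destruct Hf as [HfY [Hfc _]].
  destruct (SFT_splice Y HYsft) as [L [HL Hsplice]].
  destruct (Hfc x Hx (n + L)) as [M HM].
  destruct (left_dense_approximation HA X HXsub HXirr x (Z.max M n) Hx ltac:(lia))
    as [xt [Hxt [Hxxt Hdense]]].
  assert (Hfx : agree_on (f x) (f xt) (n + L))
    by (apply HM; [exact Hxt | apply agree_mono with (Z.max M n); [lia | exact Hxxt]]).
  assert (Hfxt_y : forall i, -(n + L) <= i <= 0 -> f xt i = y i)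
    by (intros i Hi; rewrite <- Hfx by lia; apply Hxy; lia).
  set (ys := splice (f xt) y).
  assert (Hys : Y ys) by (apply Hsplice; auto; intros i Hi; apply Hfxt_y; lia).
  assert (Hyst : left_transitive Y ys).
  { apply (left_transitive_image xt); auto.
    intros i Hi; unfold ys, splice; destruct (Z.leb_spec i 0); [reflexivity | lia]. }
  destruct (Hae xt ys Hxt Hyst) as [xn [Hxn [Hxn_left Hxn_f]]].
  { intros i Hi; unfold ys, splice; destruct (Z.leb_spec i 0); [reflexivity | simpl in Hi; lia]. }
  exists xn; split; [exact Hxn |]; split.
  - intros i Hi; rewrite Hxn_left by lia; symmetry; apply Hxxt; lia.
  - intros i Hi; rewrite Hxn_f; unfold ys, splice.
    destruct (Z.leb_spec i 0); [apply Hfxt_y; lia | reflexivity].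
Qed.

End RightContinuation.

Theorem mainTheorem4 (A B : Type) (HA : Finite A) (HB : Finite B)
  (X : (Z -> A) -> Prop) (Y : (Z -> B) -> Prop) (f : (Z -> A) -> (Z -> B)) :
  is_sofic X -> irreducible X ->
  is_SFT Y -> irreducible Y ->
  factor_map X Y f ->
  right_continuing_ae X Y f 0 ->
  forall x y, X x -> Y y -> (forall i, i <= 0 -> f x i = y i) ->
    exists x', X x' /\ (forall i, i <= 0 -> x' i = x i) /\ (forall i, f x' i = y i).
Proof.
  intros [HXsub _] HXirr HYsft _ Hf Hae x y Hx Hy Hxy.
  destruct (choice (fun (n : nat) xn => X xn /\ (forall i, - Z.of_nat n <= i <= 0 -> xn i = x i) /\
                      (forall i, - Z.of_nat n <= i <= Z.of_nat n -> f xn i = y i))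
              (fun n => right_continuation_on_window A B HA X Y f HXsub HXirr HYsft Hf Hae
                          x y (Z.of_nat n) Hx Hy Hxy ltac:(lia))) as [xs Hxs].
  destruct (cluster_point_exists HA xs) as [x' Hx'].
  assert (HX' : X x') by (apply (cluster_point_closed X xs x' (proj1 HXsub)); [apply Hxs | exact Hx']).
  exists x'; split; [exact HX' | split].
  - intros i Hi; destruct (Hx' (-i) (Z.to_nat (-i))) as [k [Hk Ha]].
    rewrite (Ha i ltac:(lia)); apply Hxs; lia.
  - intro i; destruct (proj1 (proj2 Hf) x' HX' (Z.abs i)) as [M HM].
    destruct (Hx' M (Z.to_nat (Z.abs i))) as [k [Hk Ha]].
    rewrite (HM (xs k) (proj1 (Hxs k)) Ha i ltac:(lia)); apply Hxs; lia.
Qed.
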